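(* In the setting below, let $(u^h)_{h>0}$ be a uniformly bounded family of real-valued maps on $[0,T]\times\mathbb R$ with half-relaxed limits $\overline u,\underline u$, and let $u^{n,h}=(u^h(\tau^n,x_0),\dots,u^h(\tau^n,x_M))^\top$ (grid depending on $h$). Then for every $(t,x)\in[0,T]\times\mathbb R$, $\mathcal M\underline u(t,x)\le\liminf(\mathcal M_nu^{n,h})_i\le\limsup(\mathcal M_nu^{n,h})_i\le\mathcal M\overline u(t,x)$, where $\liminf$ and $\limsup$ are taken as $h\to0$ and $(\tau^n,x_i)\to(t,x)$ over grid points of the $h$-grid.
   Context: Fix $T>0$, a metric space $Y$, nonempty compact sets $Z(t,x)\subseteq Y$ for $(t,x)\in[0,T]\times\mathbb R$, and continuous $\Gamma(t,x,z)\in\mathbb R$, $K(t,x,z)\in\mathbb R$. Intervention operator: $\mathcal MV(t,x)=\sup_{z\in Z(t,x)}\{V(t,\Gamma(t,x,z))+K(t,x,z)\}$. For each $h>0$: a time step $\Delta\tau=T/N$ and space step $\Delta x$ with $\Delta\tau,\Delta x\le Ch$ ($C$ independent of $h$), $M$ even with $M\Delta x\to\infty$ as $h\to0$, $\tau^n=T-n\Delta\tau$ ($0\le n\le N$), $x_i=(i-M/2)\Delta x$ ($0\le i\le M$); finite nonempty sets $Z^h(t,x)\subseteq Z(t,x)$ with $Z^h\to Z$ locally uniformly in the Hausdorff metric as $h\to0$ and $(t,x)\mapsto Z^h(t,x)$ Hausdorff-continuous. Linear interpolation of $U\in\mathbb R^{M+1}$: $\operatorname{interp}(U,y)=\alpha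 U_{k+1}+(1-\alpha)U_k$ if $x_k\le y<x_{k+1}$, $\alpha=(y-x_k)/(x_{k+1}-x_k)$; $U_0$ if $y\le x_0$; $U_M$ if $y\ge x_M$. Discretized intervention operator: $(\mathcal M_nU)_i=\sup_{z\in Z^h(\tau^n,x_i)}\{\operatorname{interp}(U,\Gamma(\tau^n,x_i,z))+K(\tau^n,x_i,z)\}$. Half-relaxed limits: $\overline u(t,x)=\limsup_{h\to0,(s,y)\to(t,x)}u^h(s,y)$, $\underline u(t,x)=\liminf_{h\to0,(s,y)\to(t,x)}u^h(s,y)$. *)

From Stdlib Require Import Reals Lra Lia List Classical ClassicalEpsilon.
Open Scope R_scope.

(* ---------- suprema / infima of real sets (junk value 0 if no lub) ---------- *)
Definition Rsup (E : R -> Prop) : R :=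
  match excluded_middle_informative (bound E /\ exists x, E x) with
  | left H => proj1_sig (completeness E (proj1 H) (proj2 H))
  | right _ => 0
  end.

Definition Rinf (E : R -> Prop) : R := - Rsup (fun r => E (- r)).

(* limsup along a decreasing family of sets S delta (delta > 0) as delta -> 0:
   inf over those delta > 0 for which sup (S delta) is finite, of sup (S delta). *)
Definition limsup_at (S : R -> R -> Prop) : R :=
  Rinf (fun s => exists delta, delta > 0 /\ is_lub (S delta) s).

Definition liminf_at (S : R -> R -> Prop) : R :=
  - limsup_at (fun delta r => S delta (- r)).

Definition mopen (Y : Metric_Space) (U : Base Y -> Prop) : Prop :=
  forall y, U y -> exists eps, eps > 0 /\ forall w, dist Y y w < eps -> U w.

Definition mcompact (Y : Metric_Space) (A : Base Y -> Prop) : Prop :=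
  forall (I : Type) (U : I -> Base Y -> Prop),
    (forall i, mopen Y (U i)) ->
    (forall y, A y -> exists i, U i y) ->
    exists l : list I, forall y, A y -> exists i, In i l /\ U i y.

Definition finite_set {Y : Type} (A : Y -> Prop) : Prop :=
  exists l : list Y, forall y, A y <-> In y l.

Definition pt_set_dist (Y : Metric_Space) (a : Base Y) (B : Base Y -> Prop) : R :=
  Rinf (fun r => exists b, B b /\ r = dist Y a b).

Definition hausdorff_dist (Y : Metric_Space) (A B : Base Y -> Prop) : R :=
  Rmax (Rsup (fun r => exists a, A a /\ r = pt_set_dist Y a B))
       (Rsup (fun r => exists b, B b /\ r = pt_set_dist Y b A)).

Definition interv_op {Y : Metric_Space}
  (Z : R -> R -> Base Y -> Prop) (Gamma K : R -> R -> Base Y -> R)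
  (V : R -> R -> R) (t x : R) : R :=
  Rsup (fun r => exists z, Z t x z /\ r = V t (Gamma t x z) + K t x z).

(* linear interpolation of U = (U_0..U_M) on an increasing grid xg_0 < ... < xg_M *)
Fixpoint interp_search (xg U : nat -> R) (y : R) (k fuel : nat) : R :=
  match fuel with
  | O => U k
  | S f =>
      if Rlt_dec y (xg (S k))
      then let alpha := (y - xg k) / (xg (S k) - xg k) in
           alpha * U (S k) + (1 - alpha) * U k
      else interp_search xg U y (S k) f
  end.

Definition interp (M : nat) (xg U : nat -> R) (y : R) : R :=
  if Rle_dec y (xg O) then U O
  else if Rle_dec (xg M) y then U M
  else interp_search xg U y O M.

Definition tau_grid (T : R) (N : nat) (n : nat) : R := T - INR n * (T / INR N).
Definition x_grid (M : nat) (dx : R) (i : nat) : R := (INR i - INR M / 2) * dx.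

Definition disc_interv_op {Y : Metric_Space}
  (Zh : R -> R -> Base Y -> Prop) (Gamma K : R -> R -> Base Y -> R)
  (M : nat) (xg : nat -> R) (tn : R) (U : nat -> R) (i : nat) : R :=
  Rsup (fun r => exists z, Zh tn (xg i) z /\
          r = interp M xg U (Gamma tn (xg i) z) + K tn (xg i) z).

Definition hr_set (T : R) (u : R -> R -> R -> R) (t x : R) : R -> R -> Prop :=
  fun delta r => exists h s y, 0 < h < delta /\ 0 <= s <= T /\
     Rabs (s - t) < delta /\ Rabs (y - x) < delta /\ r = u h s y.

Definition u_upper (T : R) (u : R -> R -> R -> R) (t x : R) : R :=
  limsup_at (hr_set T u t x).
Definition u_lower (T : R) (u : R -> R -> R -> R) (t x : R) : R :=
  liminf_at (hr_set T u t x).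

Definition grid_set {Y : Metric_Space} (T : R)
  (Zh : R -> R -> R -> Base Y -> Prop) (Gamma K : R -> R -> Base Y -> R)
  (N M : R -> nat) (dx : R -> R) (u : R -> R -> R -> R) (t x : R)
  : R -> R -> Prop :=
  fun delta r => exists h n i,
     0 < h < delta /\ (n <= N h)%nat /\ (i <= M h)%nat /\
     Rabs (tau_grid T (N h) n - t) < delta /\
     Rabs (x_grid (M h) (dx h) i - x) < delta /\
     r = disc_interv_op (Zh h) Gamma K (M h) (x_grid (M h) (dx h))
           (tau_grid T (N h) n)
           (fun j => u h (tau_grid T (N h) n) (x_grid (M h) (dx h) j)) i.

From Stdlib Require Import Reals Lra Lia List Classical ClassicalEpsilon.
Open Scope R_scope.

(* An interpolated value is a convex
   combination of two nodal values within dx <= C h of the interpolation point, so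
   near (t,g) it is eventually squeezed between [u_lower T u t g - eps] and
   [u_upper T u t g + eps].  For the upper bound, continuity
   of Gamma and K and compactness of Z(t,x) make this uniform in the control, and
   every control of Z^h(tau^n,x_i), a subset of Z(tau^n,x_i), is close to one of
   Z(t,x): Z is Hausdorff continuous, being a local uniform limit of the
   continuous Z^h.  For the lower bound a near-optimal control of Z(t,x) is
   approximated by controls of Z^h(tau^n,x_i). *)

Lemma Rabs_le_between x a : Rabs x <= a -> - a <= x <= a.
Proof. unfold Rabs; destruct (Rcase_abs x); lra. Qed.

Lemma Rabs_lt_between x a : Rabs x < a -> - a < x < a.
Proof. unfold Rabs; destruct (Rcase_abs x); lra. Qed.

Lemma Rsup_is_lub (E : R -> Prop) :
  (exists r, E r) -> (exists b, forall r, E r -> r <= b) -> is_lub E (Rsup E).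
Proof.
  intros Hne [b Hb]; unfold Rsup.
  destruct excluded_middle_informative as [H|H].
  - exact (proj2_sig (completeness E (proj1 H) (proj2 H))).
  - exfalso; apply H; split; [exists b; exact Hb | exact Hne].
Qed.

Lemma Rsup_upper (E : R -> Prop) r :
  (exists b, forall r, E r -> r <= b) -> E r -> r <= Rsup E.
Proof. intros Hb Hr; exact (proj1 (Rsup_is_lub E (ex_intro _ r Hr) Hb) r Hr). Qed.

Lemma Rsup_least (E : R -> Prop) b :
  (exists r, E r) -> (forall r, E r -> r <= b) -> Rsup E <= b.
Proof. intros Hne Hb; exact (proj2 (Rsup_is_lub E Hne (ex_intro _ b Hb)) b Hb). Qed.

Lemma Rsup_approx (E : R -> Prop) eps : eps > 0 ->
  (exists r, E r) -> (exists b, forall r, E r -> r <= b) ->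
  exists r, E r /\ Rsup E - eps < r.
Proof.
  intros He Hne Hb; apply NNPP; intros Hno.
  enough (Rsup E <= Rsup E - eps) by lra.
  apply Rsup_least; auto.
  intros r Hr; apply Rnot_lt_le; intros Hlt; apply Hno; exists r; split; auto; lra.
Qed.

(* On such families [limsup_at] and [liminf_at] are the genuine limits superior
   and inferior as [delta -> 0]; elsewhere they may be junk values. *)
Definition bounded_tail_family (S : R -> R -> Prop) : Prop :=
  (forall d, d > 0 -> exists r, S d r) /\
  (forall d d' r, 0 < d <= d' -> S d r -> S d' r) /\
  (exists d B, d > 0 /\ forall r, S d r -> Rabs r <= B).

Section BoundedTailFamily.
Variable S : R -> R -> Prop.
Hypothesis HS : bounded_tail_family S.

Let neg_tail_sups := fun s => exists d, d > 0 /\ is_lub (S d) (- s).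

Lemma tail_small_lub d : d > 0 -> exists d' s, 0 < d' <= d /\ is_lub (S d') s.
Proof.
  intros Hd; destruct HS as [Hne [Hmon [d1 [B [Hd1 HB]]]]].
  assert (Hd' : 0 < Rmin d d1 <= d) by (split; [apply Rmin_pos | apply Rmin_l]; lra).
  exists (Rmin d d1), (Rsup (S (Rmin d d1))); split; auto.
  apply Rsup_is_lub; [apply Hne; lra|].
  exists B; intros r Hr.
  apply (Rle_trans _ (Rabs r)); [apply Rle_abs|].
  apply HB, (Hmon (Rmin d d1)); auto; split; [lra | apply Rmin_r].
Qed.

Lemma neg_tail_sups_bounded :
  (exists s, neg_tail_sups s) /\ (exists b, forall s, neg_tail_sups s -> s <= b).
Proof.
  destruct HS as [Hne [Hmon [d1 [B [Hd1 HB]]]]]; split.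
  - destruct (tail_small_lub 1) as [d [s [Hd Hs]]]; [lra|].
    exists (- s), d; rewrite Ropp_involutive; split; [lra | exact Hs].
  - exists B; intros s [d [Hd Hs]].
    destruct (Hne (Rmin d d1)) as [r Hr]; [apply Rmin_pos; lra|].
    assert (r <= - s).
    { apply (proj1 Hs), (Hmon (Rmin d d1)); auto; split; [apply Rmin_pos; lra | apply Rmin_l]. }
    assert (Hr1 : Rabs r <= B).
    { apply HB, (Hmon (Rmin d d1)); auto; split; [apply Rmin_pos; lra | apply Rmin_r]. }
    pose proof (Rabs_le_between _ _ Hr1); lra.
Qed.

Lemma limsup_at_eventually_le eps : eps > 0 ->
  exists d, d > 0 /\ forall r, S d r -> r <= limsup_at S + eps.
Proof.
  intros He; destruct neg_tail_sups_bounded as [Hne Hb].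
  destruct (Rsup_approx _ eps He Hne Hb) as [s [[d [Hd Hs]] Hlt]].
  exists d; split; auto; intros r Hr.
  change (limsup_at S) with (- Rsup neg_tail_sups).
  pose proof (proj1 Hs r Hr); lra.
Qed.

Lemma limsup_at_le L :
  (forall eps, eps > 0 -> exists d, d > 0 /\ forall r, S d r -> r <= L + eps) ->
  limsup_at S <= L.
Proof.
  intros HL; destruct neg_tail_sups_bounded as [Hne Hb].
  change (limsup_at S) with (- Rsup neg_tail_sups).
  apply Rnot_lt_le; intros Hlt.
  set (eps := (- Rsup neg_tail_sups - L) / 2).
  destruct (HL eps) as [d [Hd Hle]]; [unfold eps; lra|].
  destruct (tail_small_lub d Hd) as [d' [s [Hd' Hs]]].
  assert (Hs_le : s <= L + eps).
  { apply (proj2 Hs); intros r Hr; apply Hle.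
    destruct HS as [_ [Hmon _]]; apply (Hmon d'); auto. }
  assert (- s <= Rsup neg_tail_sups).
  { apply Rsup_upper; auto; exists d'; rewrite Ropp_involutive; split; [lra | exact Hs]. }
  unfold eps in *; lra.
Qed.

Lemma limsup_at_abs_le B :
  (forall d r, d > 0 -> S d r -> Rabs r <= B) -> Rabs (limsup_at S) <= B.
Proof.
  intros HB; apply Rabs_le; split.
  - apply Rnot_lt_le; intros Hlt.
    destruct (limsup_at_eventually_le ((- B - limsup_at S) / 2)) as [d [Hd Hle]]; [lra|].
    destruct (proj1 HS d Hd) as [r Hr].
    pose proof (Hle r Hr); pose proof (Rabs_le_between _ _ (HB d r Hd Hr)); lra.
  - apply limsup_at_le; intros eps He; exists 1; split; [lra|].
    intros r Hr; pose proof (Rabs_le_between _ _ (HB 1 r ltac:(lra) Hr)); lra.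
Qed.

End BoundedTailFamily.

Lemma bounded_tail_family_opp S :
  bounded_tail_family S -> bounded_tail_family (fun d r => S d (- r)).
Proof.
  intros [Hne [Hmon [d1 [B [Hd1 HB]]]]]; split; [|split].
  - intros d Hd; destruct (Hne d Hd) as [r Hr]; exists (- r); rewrite Ropp_involutive; exact Hr.
  - intros d d' r Hd; apply Hmon; exact Hd.
  - exists d1, B; split; auto; intros r Hr; rewrite <- Rabs_Ropp; auto.
Qed.

Section LiminfAt.
Variable S : R -> R -> Prop.
Hypothesis HS : bounded_tail_family S.

Lemma liminf_at_eventually_ge eps : eps > 0 ->
  exists d, d > 0 /\ forall r, S d r -> liminf_at S - eps <= r.
Proof.
  intros He.
  destruct (limsup_at_eventually_le _ (bounded_tail_family_opp S HS) eps He) as [d [Hd Hle]].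
  exists d; split; auto; intros r Hr.
  assert (- r <= limsup_at (fun d r => S d (- r)) + eps).
  { apply Hle; rewrite Ropp_involutive; exact Hr. }
  unfold liminf_at; lra.
Qed.

Lemma liminf_at_ge L :
  (forall eps, eps > 0 -> exists d, d > 0 /\ forall r, S d r -> L - eps <= r) ->
  L <= liminf_at S.
Proof.
  intros HL; unfold liminf_at.
  enough (limsup_at (fun d r => S d (- r)) <= - L) by lra.
  apply (limsup_at_le _ (bounded_tail_family_opp S HS)); intros eps He.
  destruct (HL eps He) as [d [Hd Hge]]; exists d; split; auto.
  intros r Hr; pose proof (Hge _ Hr); lra.
Qed.

Lemma liminf_at_abs_le B :
  (forall d r, d > 0 -> S d r -> Rabs r <= B) -> Rabs (liminf_at S) <= B.
Proof.
  intros HB; unfold liminf_at; rewrite Rabs_Ropp.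
  apply (limsup_at_abs_le _ (bounded_tail_family_opp S HS)).
  intros d r Hd Hr; rewrite <- Rabs_Ropp; exact (HB d _ Hd Hr).
Qed.

Lemma liminf_at_le_limsup_at : liminf_at S <= limsup_at S.
Proof.
  apply Rnot_lt_le; intros Hlt.
  set (eps := (liminf_at S - limsup_at S) / 3).
  destruct (limsup_at_eventually_le S HS eps) as [d1 [Hd1 Hup]]; [unfold eps; lra|].
  destruct (liminf_at_eventually_ge eps) as [d2 [Hd2 Hlo]]; [unfold eps; lra|].
  destruct HS as [Hne [Hmon _]].
  destruct (Hne (Rmin d1 d2)) as [r Hr]; [apply Rmin_pos; lra|].
  assert (r <= limsup_at S + eps).
  { apply Hup, (Hmon (Rmin d1 d2)); auto; split; [apply Rmin_pos; lra | apply Rmin_l]. }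
  assert (liminf_at S - eps <= r).
  { apply Hlo, (Hmon (Rmin d1 d2)); auto; split; [apply Rmin_pos; lra | apply Rmin_r]. }
  unfold eps in *; lra.
Qed.

End LiminfAt.
Lemma list_upper_bound {I : Type} (l : list I) (g : I -> R) :
  exists b, forall i, In i l -> g i <= b.
Proof.
  induction l as [|a l [b Hb]]; [exists 0; intros i []|].
  exists (Rmax (g a) b); intros i [<-|Hi]; [apply Rmax_l|].
  apply (Rle_trans _ b); [auto | apply Rmax_r].
Qed.

Lemma list_positive_lower_bound {I : Type} (l : list I) (g : I -> R) :
  exists m, m > 0 /\ forall i, In i l -> g i > 0 -> m <= g i.
Proof.
  induction l as [|a l [m [Hm Hb]]]; [exists 1; split; [lra | intros i []]|].
  destruct (Rlt_dec 0 (g a)).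
  - exists (Rmin m (g a)); split; [apply Rmin_pos; lra|].
    intros i [<-|Hi] Hg; [apply Rmin_r|].
    apply (Rle_trans _ m); [apply Rmin_l | auto].
  - exists m; split; auto; intros i [<-|Hi] Hg; [lra | auto].
Qed.

Section MetricFacts.
Variable Y : Metric_Space.

Lemma mopen_guarded_ball (P : Prop) z r : mopen Y (fun w => P /\ dist Y w z < r).
Proof.
  intros w [HP Hw]; exists (r - dist Y w z); split; [lra|].
  intros w' Hw'; split; auto.
  pose proof (dist_tri Y w' z w); rewrite (dist_sym Y w' w) in *; lra.
Qed.

(* A Lebesgue-number argument: a property that holds on a ball around each
   point of a compact set holds, for one common radius, near the whole set. *)
Lemma mcompact_uniform_radius (A : Base Y -> Prop) (Q : R -> Base Y -> Prop) :
  mcompact Y A ->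
  (forall r r' w, 0 < r' <= r -> Q r w -> Q r' w) ->
  (forall z, A z -> exists r, r > 0 /\ forall w, dist Y w z < r -> Q r w) ->
  exists rho, rho > 0 /\ forall w z, A z -> dist Y w z < rho -> Q rho w.
Proof.
  intros Hc Hanti Hloc.
  destruct (Hc (Base Y * R)%type (fun i w =>
      (snd i > 0 /\ forall w', dist Y w' (fst i) < snd i -> Q (snd i) w') /\
      dist Y w (fst i) < snd i / 2)) as [l Hl].
  - intros i; apply mopen_guarded_ball.
  - intros z Hz; destruct (Hloc z Hz) as [r [Hr Hq]]; exists (z, r); simpl.
    assert (dist Y z z = 0) by (apply dist_refl; reflexivity); repeat split; auto; lra.
  - destruct (list_positive_lower_bound l (fun i => snd i / 2)) as [m [Hm Hmin]].
    exists m; split; auto; intros w z Hz Hwz.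
    destruct (Hl z Hz) as [[zi ri] [Hin [[Hri Hq] Hd]]]; simpl in *.
    assert (m <= ri / 2) by (apply (Hmin (zi, ri)); simpl; auto; lra).
    apply (Hanti ri); [lra|]; apply Hq.
    pose proof (dist_tri Y w zi z); lra.
Qed.

Lemma mcompact_bounded_above (A : Base Y -> Prop) (f : Base Y -> R) :
  mcompact Y A ->
  (forall z, A z -> exists r b, r > 0 /\ forall w, dist Y w z < r -> f w <= b) ->
  exists B, forall w, A w -> f w <= B.
Proof.
  intros Hc Hloc.
  destruct (Hc (Base Y * R * R)%type (fun i w =>
      (forall w', dist Y w' (fst (fst i)) < snd (fst i) -> f w' <= snd i) /\
      dist Y w (fst (fst i)) < snd (fst i))) as [l Hl].
  - intros i; apply mopen_guarded_ball.
  - intros z Hz; destruct (Hloc z Hz) as [r [b [Hr Hb]]]; exists (z, r, b); simpl.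
    assert (dist Y z z = 0) by (apply dist_refl; reflexivity); split; auto; lra.
  - destruct (list_upper_bound l snd) as [B HB]; exists B; intros w Hw.
    destruct (Hl w Hw) as [[[zi ri] bi] [Hin [Hf Hd]]]; simpl in *.
    apply (Rle_trans _ bi); [auto | exact (HB _ Hin)].
Qed.

Definition mbounded (A : Base Y -> Prop) : Prop :=
  exists a0 R0, forall a, A a -> dist Y a a0 <= R0.

Lemma mcompact_mbounded A : mcompact Y A -> (exists a, A a) -> mbounded A.
Proof.
  intros Hc [a0 Ha0]; exists a0.
  apply (mcompact_bounded_above A (fun w => dist Y w a0) Hc).
  intros z Hz; exists 1, (dist Y z a0 + 1); split; [lra|].
  intros w Hw; pose proof (dist_tri Y w a0 z); lra.
Qed.

Lemma pt_set_dist_le a (B : Base Y -> Prop) b : B b -> pt_set_dist Y a B <= dist Y a b.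
Proof.
  intros Hb; unfold pt_set_dist, Rinf.
  enough (- dist Y a b <= Rsup (fun r => exists b, B b /\ - r = dist Y a b)) by lra.
  apply Rsup_upper; [|exists b; split; auto; lra].
  exists 0; intros r [b' [_ Hr]]; pose proof (dist_pos Y a b'); lra.
Qed.

Lemma pt_set_dist_lt a (B : Base Y -> Prop) eta : (exists b, B b) ->
  pt_set_dist Y a B < eta -> exists b, B b /\ dist Y a b < eta.
Proof.
  intros [b0 Hb0] Hlt; unfold pt_set_dist, Rinf in Hlt.
  set (E := fun r => exists b, B b /\ - r = dist Y a b) in *.
  destruct (Rsup_approx E (eta + Rsup E)) as [r [[b [Hb Hr]] Hr']].
  - lra.
  - exists (- dist Y a b0), b0; split; auto; lra.
  - exists 0; intros r [b' [_ Hr]]; pose proof (dist_pos Y a b'); lra.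
  - exists b; split; auto; lra.
Qed.

Lemma hausdorff_dist_sym A B : hausdorff_dist Y A B = hausdorff_dist Y B A.
Proof. apply Rmax_comm. Qed.

Definition approx_within (eta : R) (A B : Base Y -> Prop) : Prop :=
  forall a, A a -> exists b, B b /\ dist Y a b < eta.

Lemma approx_within_trans e1 e2 A B C :
  approx_within e1 A B -> approx_within e2 B C -> approx_within (e1 + e2) A C.
Proof.
  intros HAB HBC a Ha; destruct (HAB a Ha) as [b [Hb Hab]].
  destruct (HBC b Hb) as [c [Hc Hbc]]; exists c; split; auto.
  pose proof (dist_tri Y a c b); lra.
Qed.

Lemma hausdorff_dist_lt_approx_l A B eta : mbounded A -> (exists b, B b) ->
  hausdorff_dist Y A B < eta -> approx_within eta A B.
Proof.
  intros [a0 [R0 HR]] [b0 Hb0] Hh a Ha; apply pt_set_dist_lt; [exists b0; auto|].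
  apply (Rle_lt_trans _ (hausdorff_dist Y A B)); auto.
  apply (Rle_trans _ (Rsup (fun r => exists a, A a /\ r = pt_set_dist Y a B))); [|apply Rmax_l].
  apply Rsup_upper; [|exists a; auto].
  exists (R0 + dist Y a0 b0); intros r [a' [Ha' ->]].
  apply (Rle_trans _ (dist Y a' b0)); [apply pt_set_dist_le; auto|].
  pose proof (dist_tri Y a' b0 a0); pose proof (HR a' Ha'); lra.
Qed.

Lemma hausdorff_dist_lt_approx A B eta :
  mbounded A -> mbounded B -> (exists a, A a) -> (exists b, B b) ->
  hausdorff_dist Y A B < eta -> approx_within eta A B /\ approx_within eta B A.
Proof.
  intros HA HB HAne HBne Hh; split; [apply hausdorff_dist_lt_approx_l; auto|].
  apply hausdorff_dist_lt_approx_l; auto; rewrite hausdorff_dist_sym; exact Hh.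
Qed.

End MetricFacts.

Lemma interp_search_spec (xg U : nat -> R) y M : forall fuel k,
  (k + fuel = M)%nat -> xg k <= y -> y < xg M ->
  exists k', (k' < M)%nat /\ xg k' <= y < xg (S k') /\
    interp_search xg U y k fuel =
      (y - xg k') / (xg (S k') - xg k') * U (S k')
      + (1 - (y - xg k') / (xg (S k') - xg k')) * U k'.
Proof.
  induction fuel as [|f IH]; intros k Hk Hky HyM; simpl.
  - replace k with M in Hky by lia; lra.
  - destruct (Rlt_dec y (xg (S k))); [exists k; repeat split; auto; lia|].
    apply IH; [lia | lra | exact HyM].
Qed.

Lemma x_grid_S M dx k : x_grid M dx (S k) = x_grid M dx k + dx.
Proof. unfold x_grid; rewrite S_INR; ring. Qed.

Lemma interp_x_grid_convex M dx U y : dx > 0 -> x_grid M dx 0 < y < x_grid M dx M ->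
  exists k a, (k < M)%nat /\ 0 <= a <= 1 /\
    Rabs (x_grid M dx k - y) <= dx /\ Rabs (x_grid M dx (S k) - y) <= dx /\
    interp M (x_grid M dx) U y = a * U (S k) + (1 - a) * U k.
Proof.
  intros Hdx [H0 HM]; unfold interp.
  destruct (Rle_dec y (x_grid M dx 0)); [lra|].
  destruct (Rle_dec (x_grid M dx M) y); [lra|].
  destruct (interp_search_spec (x_grid M dx) U y M M 0) as [k [Hk [[Hk1 Hk2] ->]]];
    auto; [lra|].
  rewrite x_grid_S in *.
  replace (x_grid M dx k + dx - x_grid M dx k) with dx by ring.
  exists k, ((y - x_grid M dx k) / dx); repeat split; auto.
  - apply Rmult_le_pos; [lra | left; apply Rinv_0_lt_compat; lra].
  - apply (Rmult_le_reg_r dx); auto; unfold Rdiv.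
    rewrite Rmult_assoc, Rinv_l by lra; lra.
  - apply Rabs_le; lra.
  - rewrite x_grid_S; apply Rabs_le; lra.
Qed.

Lemma interp_x_grid_abs_le M dx U b : dx > 0 ->
  (forall j, (j <= M)%nat -> Rabs (U j) <= b) ->
  forall y, Rabs (interp M (x_grid M dx) U y) <= b.
Proof.
  intros Hdx HU y.
  destruct (Rle_dec y (x_grid M dx 0)) as [Hy0|Hy0].
  { unfold interp; destruct (Rle_dec y (x_grid M dx 0)); [apply HU; lia | contradiction]. }
  destruct (Rle_dec (x_grid M dx M) y) as [HyM|HyM].
  { unfold interp; destruct (Rle_dec y (x_grid M dx 0)); [contradiction|].
    destruct (Rle_dec (x_grid M dx M) y); [apply HU; lia | contradiction]. }
  destruct (interp_x_grid_convex M dx U y Hdx) as [k [a [Hk [Ha [_ [_ ->]]]]]]; [lra|].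
  pose proof (Rabs_le_between _ _ (HU k ltac:(lia))).
  pose proof (Rabs_le_between _ _ (HU (S k) ltac:(lia))).
  apply Rabs_le; nra.
Qed.

Lemma nat_floor_mult d a : d > 0 -> a >= 0 -> exists n, INR n * d <= a < INR n * d + d.
Proof.
  intros Hd Ha; destruct (INR_archimed d a Hd) as [m Hm]; revert Hm.
  induction m as [|m IH]; intros Hm; [simpl in Hm; lra|].
  destruct (Rlt_dec a (INR m * d)); [apply IH; lra|].
  exists m; rewrite S_INR in Hm; lra.
Qed.

Lemma tau_grid_bounds T N n : T > 0 -> (N >= 1)%nat -> (n <= N)%nat ->
  0 <= tau_grid T N n <= T.
Proof.
  intros HT HN Hn; unfold tau_grid.
  assert (HN' : 1 <= INR N) by (apply (le_INR 1); lia).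
  assert (Hn' : INR n <= INR N) by (apply le_INR; lia).
  pose proof (pos_INR n).
  assert (0 < T / INR N) by (apply Rdiv_lt_0_compat; lra).
  assert (INR N * (T / INR N) = T) by (field; lra).
  split; nra.
Qed.

Lemma pos_lower_bound a b : a > 0 -> b > 0 -> exists c, c > 0 /\ c <= a /\ c <= b.
Proof. intros; exists (Rmin a b); split; [apply Rmin_pos; lra | split; [apply Rmin_l | apply Rmin_r]]. Qed.

Section IntervLimits.
Variables (T : R) (Y : Metric_Space) (Z : R -> R -> Base Y -> Prop)
  (Gamma K : R -> R -> Base Y -> R) (C : R) (N M : R -> nat) (dx : R -> R)
  (Zh : R -> R -> R -> Base Y -> Prop) (u : R -> R -> R -> R) (Bu : R).

Hypothesis HT : T > 0.
Hypothesis HZne : forall t x, 0 <= t <= T -> exists z, Z t x z.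
Hypothesis HZcpt : forall t x, 0 <= t <= T -> mcompact Y (Z t x).
Hypothesis HGc : forall t x z, 0 <= t <= T -> forall eps, eps > 0 -> exists del, del > 0 /\
  forall s y w, 0 <= s <= T -> Rabs (s - t) < del -> Rabs (y - x) < del ->
    dist Y w z < del -> Rabs (Gamma s y w - Gamma t x z) < eps.
Hypothesis HKc : forall t x z, 0 <= t <= T -> forall eps, eps > 0 -> exists del, del > 0 /\
  forall s y w, 0 <= s <= T -> Rabs (s - t) < del -> Rabs (y - x) < del ->
    dist Y w z < del -> Rabs (K s y w - K t x z) < eps.
Hypothesis HN : forall h, h > 0 -> (N h >= 1)%nat.
Hypothesis Hdx : forall h, h > 0 -> dx h > 0.
Hypothesis HCtau : forall h, h > 0 -> T / INR (N h) <= C * h.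
Hypothesis HCdx : forall h, h > 0 -> dx h <= C * h.
Hypothesis HMinf : forall B, exists h0, h0 > 0 /\
  forall h, 0 < h < h0 -> INR (M h) * dx h > B.
Hypothesis HZhne : forall h t x, h > 0 -> 0 <= t <= T -> exists z, Zh h t x z.
Hypothesis HZhsub : forall h t x z, h > 0 -> 0 <= t <= T -> Zh h t x z -> Z t x z.
Hypothesis HZhconv : forall Rb eps, eps > 0 -> exists h0, h0 > 0 /\
  forall h, 0 < h < h0 -> forall t x, 0 <= t <= T -> Rabs x <= Rb ->
    hausdorff_dist Y (Zh h t x) (Z t x) < eps.
Hypothesis HZhcont : forall h, h > 0 -> forall t x, 0 <= t <= T ->
  forall eps, eps > 0 -> exists del, del > 0 /\
  forall s y, 0 <= s <= T -> Rabs (s - t) < del -> Rabs (y - x) < del ->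
    hausdorff_dist Y (Zh h s y) (Zh h t x) < eps.
Hypothesis HBu : forall h t x, h > 0 -> 0 <= t <= T -> Rabs (u h t x) <= Bu.

Local Notation grid_interp h s :=
  (interp (M h) (x_grid (M h) (dx h)) (fun j => u h s (x_grid (M h) (dx h) j))).

Lemma C_pos : C > 0.
Proof.
  pose proof (HN 1 ltac:(lra)); pose proof (HCtau 1 ltac:(lra)).
  assert (1 <= INR (N 1)) by (apply (le_INR 1); lia).
  assert (0 < T / INR (N 1)) by (apply Rdiv_lt_0_compat; lra).
  lra.
Qed.

Lemma grid_point_near t x delta : 0 <= t <= T -> delta > 0 ->
  exists h n i, 0 < h < delta /\ (n <= N h)%nat /\ (i <= M h)%nat /\
    Rabs (tau_grid T (N h) n - t) < delta /\ Rabs (x_grid (M h) (dx h) i - x) < delta.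
Proof.
  intros Ht Hd; pose proof C_pos.
  destruct (HMinf (2 * Rabs x)) as [h0 [Hh0 HM]].
  destruct (pos_lower_bound delta (delta / C)) as [c1 [Hc1 [Hc1a Hc1b]]];
    [lra | apply Rdiv_lt_0_compat; lra |].
  destruct (pos_lower_bound c1 h0) as [c [Hc [Hca Hcb]]]; [lra | lra |].
  set (h := c / 2).
  assert (Hh : 0 < h) by (unfold h; lra).
  assert (HCh : C * h < delta).
  { assert (C * (delta / C) = delta) by (field; lra); unfold h; nra. }
  pose proof (HCtau h Hh); pose proof (HCdx h Hh); pose proof (Hdx h Hh).
  pose proof (HM h ltac:(unfold h; lra)).
  assert (HNh : 1 <= INR (N h)) by (apply (le_INR 1), HN; lra).
  set (d := T / INR (N h)) in *.
  assert (Hdpos : 0 < d) by (apply Rdiv_lt_0_compat; lra).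
  assert (HNd : INR (N h) * d = T) by (unfold d; field; lra).
  destruct (nat_floor_mult d (T - t)) as [n Hn]; [lra | lra |].
  pose proof (Rabs_le_between x (Rabs x) (Rle_refl _)).
  destruct (nat_floor_mult (dx h) (x + INR (M h) * dx h / 2)) as [i Hi]; [lra | lra |].
  exists h, n, i; split; [unfold h; lra|].
  split; [apply INR_le, (Rmult_le_reg_r d); lra|].
  split; [apply INR_le, (Rmult_le_reg_r (dx h)); lra|].
  unfold tau_grid, x_grid; fold d.
  split; apply Rabs_def1; nra.
Qed.

Lemma Z_mbounded t x : 0 <= t <= T -> mbounded Y (Z t x).
Proof. intros Ht; apply mcompact_mbounded; auto. Qed.

Lemma Zh_mbounded h t x : h > 0 -> 0 <= t <= T -> mbounded Y (Zh h t x).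
Proof.
  intros Hh Ht; destruct (Z_mbounded t x Ht) as [a0 [R0 HR]].
  exists a0, R0; intros a Ha; apply HR, (HZhsub h); auto.
Qed.

Lemma Zh_approx_Z h t x eta : h > 0 -> 0 <= t <= T ->
  hausdorff_dist Y (Zh h t x) (Z t x) < eta ->
  approx_within Y eta (Zh h t x) (Z t x) /\ approx_within Y eta (Z t x) (Zh h t x).
Proof. intros; apply hausdorff_dist_lt_approx; auto using Zh_mbounded, Z_mbounded. Qed.

Lemma Zh_approx_Zh h s y t x eta : h > 0 -> 0 <= s <= T -> 0 <= t <= T ->
  hausdorff_dist Y (Zh h s y) (Zh h t x) < eta ->
  approx_within Y eta (Zh h s y) (Zh h t x) /\ approx_within Y eta (Zh h t x) (Zh h s y).
Proof. intros; apply hausdorff_dist_lt_approx; auto using Zh_mbounded. Qed.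

Lemma Z_continuous t x eta : 0 <= t <= T -> eta > 0 -> exists del, del > 0 /\
  forall s y, 0 <= s <= T -> Rabs (s - t) < del -> Rabs (y - x) < del ->
    approx_within Y eta (Z s y) (Z t x) /\ approx_within Y eta (Z t x) (Z s y).
Proof.
  intros Ht He.
  destruct (HZhconv (Rabs x + 1) (eta / 3)) as [h0 [Hh0 Hconv]]; [lra|].
  set (h := h0 / 2); assert (Hh : 0 < h < h0) by (unfold h; lra).
  destruct (HZhcont h ltac:(lra) t x Ht (eta / 3)) as [del [Hdel Hcont]]; [lra|].
  destruct (pos_lower_bound del 1) as [d [Hd [Hdel' Hd1]]]; [lra | lra |].
  exists d; split; auto; intros s y Hs Hst Hyx.
  assert (Hy : Rabs y <= Rabs x + 1).
  { pose proof (Rabs_triang (y - x) x); replace (y - x + x) with y in * by ring; lra. }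
  destruct (Zh_approx_Z h s y (eta / 3) ltac:(lra) Hs (Hconv h Hh s y Hs Hy))
    as [Ahs_Zs AZs_hs].
  destruct (Zh_approx_Z h t x (eta / 3) ltac:(lra) Ht (Hconv h Hh t x Ht ltac:(lra)))
    as [Aht_Zt AZt_ht].
  destruct (Zh_approx_Zh h s y t x (eta / 3) ltac:(lra) Hs Ht (Hcont s y Hs ltac:(lra) ltac:(lra)))
    as [Ahs_ht Aht_hs].
  replace eta with (eta / 3 + eta / 3 + eta / 3) by field.
  split.
  - apply approx_within_trans with (B := Zh h t x); auto.
    apply approx_within_trans with (B := Zh h s y); auto.
  - apply approx_within_trans with (B := Zh h s y); auto.
    apply approx_within_trans with (B := Zh h t x); auto.
Qed.

Lemma hr_set_abs_le t y d r : hr_set T u t y d r -> Rabs r <= Bu.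
Proof. intros [h [s [y' [Hh [Hs [_ [_ ->]]]]]]]; apply HBu; lra. Qed.

Lemma hr_set_tail t y : 0 <= t <= T -> bounded_tail_family (hr_set T u t y).
Proof.
  intros Ht; split; [|split].
  - intros d Hd; exists (u (d / 2) t y), (d / 2), t, y.
    rewrite !Rminus_diag, !Rabs_R0; repeat split; auto; lra.
  - intros d d' r Hdd [h [s [y' [Hh [Hs [H1 [H2 ->]]]]]]].
    exists h, s, y'; repeat split; auto; lra.
  - exists 1, Bu; split; [lra|]; apply hr_set_abs_le.
Qed.

Lemma u_upper_abs_le t y : 0 <= t <= T -> Rabs (u_upper T u t y) <= Bu.
Proof.
  intros Ht; apply (limsup_at_abs_le _ (hr_set_tail t y Ht)).
  intros d r _; apply hr_set_abs_le.
Qed.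

Lemma u_lower_abs_le t y : 0 <= t <= T -> Rabs (u_lower T u t y) <= Bu.
Proof.
  intros Ht; apply (liminf_at_abs_le _ (hr_set_tail t y Ht)).
  intros d r _; apply hr_set_abs_le.
Qed.

Lemma interp_grid_near t g d0 : 0 <= t <= T -> d0 > 0 -> exists r, r > 0 /\
  forall h s y, 0 < h < r -> 0 <= s <= T -> Rabs (s - t) < r -> Rabs (y - g) < r ->
  exists a v1 v2, 0 <= a <= 1 /\ hr_set T u t g d0 v1 /\ hr_set T u t g d0 v2 /\
    grid_interp h s y = a * v1 + (1 - a) * v2.
Proof.
  intros Ht Hd0; pose proof C_pos.
  destruct (HMinf (2 * (Rabs g + d0))) as [h0 [Hh0 HM]].
  destruct (pos_lower_bound (d0 / 2) (d0 / (2 * C))) as [r1 [Hr1 [Hr1a Hr1b]]];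
    [lra | apply Rdiv_lt_0_compat; lra |].
  destruct (pos_lower_bound r1 h0) as [r [Hr [Hra Hrb]]]; [lra | lra |].
  exists r; split; auto; intros h s y Hh Hs Hst Hyg.
  pose proof (Hdx h ltac:(lra)); pose proof (HCdx h ltac:(lra)).
  assert (Hdxh : dx h < d0 / 2).
  { assert (C * (d0 / (2 * C)) = d0 / 2) by (field; lra); nra. }
  pose proof (HM h ltac:(lra)).
  assert (Hx0 : x_grid (M h) (dx h) 0 = - (INR (M h) * dx h) / 2).
  { unfold x_grid; simpl; field. }
  assert (HxM : x_grid (M h) (dx h) (M h) = INR (M h) * dx h / 2).
  { unfold x_grid; field. }
  pose proof (Rabs_le_between g (Rabs g) (Rle_refl _)).
  pose proof (Rabs_lt_between _ _ Hyg); pose proof (Rabs_lt_between _ _ Hst).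
  assert (Hnode : forall j, Rabs (x_grid (M h) (dx h) j - y) <= dx h ->
            hr_set T u t g d0 (u h s (x_grid (M h) (dx h) j))).
  { intros j Hj; pose proof (Rabs_le_between _ _ Hj).
    exists h, s, (x_grid (M h) (dx h) j); repeat split; try lra; apply Rabs_def1; lra. }
  destruct (interp_x_grid_convex (M h) (dx h) (fun j => u h s (x_grid (M h) (dx h) j)) y)
    as [k [a [_ [Ha [Hk [HSk ->]]]]]]; [lra | rewrite Hx0, HxM; lra |].
  exists a, (u h s (x_grid (M h) (dx h) (S k))), (u h s (x_grid (M h) (dx h) k)).
  split; [exact Ha | split; [apply Hnode, HSk | split; [apply Hnode, Hk | reflexivity]]].
Qed.

Lemma interp_grid_le_upper t g eps : 0 <= t <= T -> eps > 0 -> exists r, r > 0 /\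
  forall h s y, 0 < h < r -> 0 <= s <= T -> Rabs (s - t) < r -> Rabs (y - g) < r ->
  grid_interp h s y <= u_upper T u t g + eps.
Proof.
  intros Ht He.
  destruct (limsup_at_eventually_le _ (hr_set_tail t g Ht) eps He) as [d0 [Hd0 Hle]].
  destruct (interp_grid_near t g d0 Ht Hd0) as [r [Hr Hnear]].
  exists r; split; auto; intros h s y Hh Hs Hst Hyg.
  destruct (Hnear h s y Hh Hs Hst Hyg) as [a [v1 [v2 [Ha [Hv1 [Hv2 ->]]]]]].
  pose proof (Hle v1 Hv1); pose proof (Hle v2 Hv2); unfold u_upper; nra.
Qed.

Lemma interp_grid_ge_lower t g eps : 0 <= t <= T -> eps > 0 -> exists r, r > 0 /\
  forall h s y, 0 < h < r -> 0 <= s <= T -> Rabs (s - t) < r -> Rabs (y - g) < r ->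
  u_lower T u t g - eps <= grid_interp h s y.
Proof.
  intros Ht He.
  destruct (liminf_at_eventually_ge _ (hr_set_tail t g Ht) eps He) as [d0 [Hd0 Hge]].
  destruct (interp_grid_near t g d0 Ht Hd0) as [r [Hr Hnear]].
  exists r; split; auto; intros h s y Hh Hs Hst Hyg.
  destruct (Hnear h s y Hh Hs Hst Hyg) as [a [v1 [v2 [Ha [Hv1 [Hv2 ->]]]]]].
  pose proof (Hge v1 Hv1); pose proof (Hge v2 Hv2); unfold u_lower; nra.
Qed.

Lemma K_bounded_above t x : 0 <= t <= T -> exists b, forall z, Z t x z -> K t x z <= b.
Proof.
  intros Ht; apply mcompact_bounded_above; auto.
  intros z Hz; destruct (HKc t x z Ht 1) as [del [Hdel Hcont]]; [lra|].
  exists del, (K t x z + 1); split; auto; intros w Hw.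
  assert (HK : Rabs (K t x w - K t x z) < 1).
  { apply Hcont; rewrite ?Rminus_diag, ?Rabs_R0; auto; lra. }
  pose proof (Rabs_lt_between _ _ HK); lra.
Qed.

Lemma interv_op_set_bounded (V : R -> R -> R) t x : 0 <= t <= T ->
  (forall y, Rabs (V t y) <= Bu) ->
  (exists r, exists z, Z t x z /\ r = V t (Gamma t x z) + K t x z) /\
  (exists b, forall r, (exists z, Z t x z /\ r = V t (Gamma t x z) + K t x z) -> r <= b).
Proof.
  intros Ht HV; split.
  - destruct (HZne t x Ht) as [z Hz]; eexists; exists z; eauto.
  - destruct (K_bounded_above t x Ht) as [b Hb]; exists (Bu + b).
    intros r [z [Hz ->]]; pose proof (Rabs_le_between _ _ (HV (Gamma t x z))).
    pose proof (Hb z Hz); lra.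
Qed.

Lemma disc_interv_op_set_bounded h s y : h > 0 -> 0 <= s <= T ->
  exists b, forall r,
    (exists z, Zh h s y z /\ r = grid_interp h s (Gamma s y z) + K s y z) -> r <= b.
Proof.
  intros Hh Hs; destruct (K_bounded_above s y Hs) as [b Hb]; exists (Bu + b).
  intros r [z [Hz ->]].
  assert (Hint : Rabs (grid_interp h s (Gamma s y z)) <= Bu).
  { apply interp_x_grid_abs_le; auto; intros j _; apply HBu; auto. }
  pose proof (Rabs_le_between _ _ Hint); pose proof (Hb z (HZhsub h s y z Hh Hs Hz)); lra.
Qed.

Local Notation grid_values t x := (grid_set T Zh Gamma K N M dx u t x).

Lemma grid_set_monotone t x d d' r : 0 < d <= d' -> grid_values t x d r -> grid_values t x d' r.
Proof.
  intros Hd [h [n [i [Hh [Hn [Hi [Htau [Hxi ->]]]]]]]].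
  exists h, n, i; repeat split; auto; lra.
Qed.

Lemma grid_set_nonempty t x d : 0 <= t <= T -> d > 0 -> exists r, grid_values t x d r.
Proof.
  intros Ht Hd; destruct (grid_point_near t x d Ht Hd) as [h [n [i [Hh [Hn [Hi [Htau Hxi]]]]]]].
  eexists; exists h, n, i; repeat split; eauto; lra.
Qed.

Lemma grid_set_eventually_le t x eps : 0 <= t <= T -> eps > 0 ->
  exists d, d > 0 /\ forall r, grid_values t x d r ->
    r <= interv_op Z Gamma K (u_upper T u) t x + eps.
Proof.
  intros Ht He; set (MU := interv_op Z Gamma K (u_upper T u) t x).
  destruct (interv_op_set_bounded (u_upper T u) t x Ht (fun y => u_upper_abs_le t y Ht))
    as [_ Hbd].
  destruct (mcompact_uniform_radius Y (Z t x) (fun r w => forall s y h,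
      0 <= s <= T -> Rabs (s - t) < r -> Rabs (y - x) < r -> 0 < h < r ->
      grid_interp h s (Gamma s y w) + K s y w <= MU + eps) (HZcpt t x Ht))
    as [rho [Hrho Hunif]].
  - intros r r' w Hr Hq s y h Hs Hst Hyx Hh; apply Hq; auto; lra.
  - intros z Hz.
    destruct (interp_grid_le_upper t (Gamma t x z) (eps / 2) Ht) as [r0 [Hr0 Hint]]; [lra|].
    destruct (HGc t x z Ht r0 Hr0) as [del1 [Hdel1 HG]].
    destruct (HKc t x z Ht (eps / 2)) as [del2 [Hdel2 HK]]; [lra|].
    destruct (pos_lower_bound del1 del2) as [r1 [Hr1 [Hr1a Hr1b]]]; auto.
    destruct (pos_lower_bound r1 r0) as [r [Hr [Hra Hrb]]]; auto.
    exists r; split; auto; intros w Hw s y h Hs Hst Hyx Hh.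
    assert (Hg : grid_interp h s (Gamma s y w) <= u_upper T u t (Gamma t x z) + eps / 2).
    { apply Hint; auto; try lra; apply HG; auto; lra. }
    assert (Hk : Rabs (K s y w - K t x z) < eps / 2) by (apply HK; auto; lra).
    assert (u_upper T u t (Gamma t x z) + K t x z <= MU).
    { apply Rsup_upper; [exact Hbd | exists z; auto]. }
    pose proof (Rabs_lt_between _ _ Hk); lra.
  - destruct (Z_continuous t x rho Ht Hrho) as [dZ [HdZ HZ]].
    destruct (pos_lower_bound rho dZ) as [d [Hd [Hda Hdb]]]; auto.
    exists d; split; auto; intros r [h [n [i [Hh [Hn [Hi [Htau [Hxi ->]]]]]]]].
    pose proof (tau_grid_bounds T (N h) n HT (HN h ltac:(lra)) Hn) as Hs.
    unfold disc_interv_op; apply Rsup_least.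
    + destruct (HZhne h (tau_grid T (N h) n) (x_grid (M h) (dx h) i) ltac:(lra) Hs) as [w Hw].
      eexists; exists w; split; eauto.
    + intros v [w [Hw ->]].
      assert (Hnear : approx_within Y rho (Z (tau_grid T (N h) n) (x_grid (M h) (dx h) i)) (Z t x)).
      { apply (HZ _ _ Hs); lra. }
      destruct (Hnear w (HZhsub h _ _ w ltac:(lra) Hs Hw)) as [z [Hz Hwz]].
      apply (Hunif w z Hz Hwz); auto; lra.
Qed.

Lemma grid_set_eventually_ge t x eps : 0 <= t <= T -> eps > 0 ->
  exists d, d > 0 /\ forall r, grid_values t x d r ->
    interv_op Z Gamma K (u_lower T u) t x - eps <= r.
Proof.
  intros Ht He.
  destruct (interv_op_set_bounded (u_lower T u) t x Ht (fun y => u_lower_abs_le t y Ht))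
    as [Hne Hbd].
  destruct (Rsup_approx _ (eps / 3) ltac:(lra) Hne Hbd) as [v [[z [Hz ->]] Hv]].
  fold (interv_op Z Gamma K (u_lower T u) t x) in Hv.
  destruct (interp_grid_ge_lower t (Gamma t x z) (eps / 3) Ht) as [r0 [Hr0 Hint]]; [lra|].
  destruct (HGc t x z Ht r0 Hr0) as [del1 [Hdel1 HG]].
  destruct (HKc t x z Ht (eps / 3)) as [del2 [Hdel2 HK]]; [lra|].
  destruct (pos_lower_bound del1 del2) as [eta [Heta [Hetaa Hetab]]]; auto.
  destruct (Z_continuous t x (eta / 2) Ht) as [dZ [HdZ HZ]]; [lra|].
  destruct (HZhconv (Rabs x + 1) (eta / 2)) as [h0 [Hh0 Hconv]]; [lra|].
  destruct (pos_lower_bound r0 eta) as [d1 [Hd1 [Hd1a Hd1b]]]; auto.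
  destruct (pos_lower_bound dZ h0) as [d2 [Hd2 [Hd2a Hd2b]]]; auto.
  destruct (pos_lower_bound d1 d2) as [d3 [Hd3 [Hd3a Hd3b]]]; auto.
  destruct (pos_lower_bound d3 1) as [d [Hd [Hda Hdb]]]; [lra | lra |].
  exists d; split; auto; intros r [h [n [i [Hh [Hn [Hi [Htau [Hxi ->]]]]]]]].
  set (s := tau_grid T (N h) n) in *; set (y := x_grid (M h) (dx h) i) in *.
  assert (Hs : 0 <= s <= T) by (apply tau_grid_bounds; auto; apply HN; lra).
  assert (Hy : Rabs y <= Rabs x + 1).
  { pose proof (Rabs_triang (y - x) x); replace (y - x + x) with y in * by ring; lra. }
  assert (Happrox : approx_within Y (eta / 2 + eta / 2) (Z t x) (Zh h s y)).
  { apply approx_within_trans with (B := Z s y).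
    - apply (HZ s y Hs); lra.
    - apply (Zh_approx_Z h s y); [lra | exact Hs | apply Hconv; auto; lra]. }
  destruct (Happrox z Hz) as [w [Hw Hzw]]; rewrite dist_sym in Hzw.
  assert (Hg : u_lower T u t (Gamma t x z) - eps / 3 <= grid_interp h s (Gamma s y w)).
  { apply Hint; auto; try lra; apply HG; auto; lra. }
  assert (Hk : Rabs (K s y w - K t x z) < eps / 3) by (apply HK; auto; lra).
  pose proof (Rabs_lt_between _ _ Hk).
  apply (Rle_trans _ (grid_interp h s (Gamma s y w) + K s y w)); [lra|].
  unfold disc_interv_op; apply Rsup_upper.
  - apply disc_interv_op_set_bounded; auto; lra.
  - exists w; split; auto.
Qed.

Lemma grid_set_tail t x : 0 <= t <= T -> bounded_tail_family (grid_values t x).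
Proof.
  intros Ht; split; [|split].
  - intros d Hd; apply grid_set_nonempty; auto.
  - intros d d' r; apply grid_set_monotone.
  - destruct (grid_set_eventually_le t x 1 Ht) as [da [Hda Hup]]; [lra|].
    destruct (grid_set_eventually_ge t x 1 Ht) as [db [Hdb Hlo]]; [lra|].
    destruct (pos_lower_bound da db) as [d [Hd [Hdda Hddb]]]; auto.
    set (MU := interv_op Z Gamma K (u_upper T u) t x).
    set (ML := interv_op Z Gamma K (u_lower T u) t x).
    exists d, (Rabs (MU + 1) + Rabs (ML - 1)); split; auto; intros r Hr.
    pose proof (Hup r (grid_set_monotone t x d da r ltac:(lra) Hr)).
    pose proof (Hlo r (grid_set_monotone t x d db r ltac:(lra) Hr)).
    pose proof (Rabs_le_between (MU + 1) _ (Rle_refl _)).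
    pose proof (Rabs_le_between (ML - 1) _ (Rle_refl _)).
    unfold MU, ML in *; apply Rabs_le; lra.
Qed.

End IntervLimits.

Theorem lemma4p9
  (T : R) (HT : T > 0)
  (Y : Metric_Space)
  (Z : R -> R -> Base Y -> Prop)
  (Gamma K : R -> R -> Base Y -> R)
  (C : R)
  (N M : R -> nat) (dx : R -> R)
  (Zh : R -> R -> R -> Base Y -> Prop)
  (u : R -> R -> R -> R)
  (HZne : forall t x, 0 <= t <= T -> exists z, Z t x z)
  (HZcpt : forall t x, 0 <= t <= T -> mcompact Y (Z t x))
  (HGc : forall t x z, 0 <= t <= T -> forall eps, eps > 0 -> exists del, del > 0 /\
     forall s y w, 0 <= s <= T -> Rabs (s - t) < del -> Rabs (y - x) < del ->
       dist Y w z < del -> Rabs (Gamma s y w - Gamma t x z) < eps)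
  (HKc : forall t x z, 0 <= t <= T -> forall eps, eps > 0 -> exists del, del > 0 /\
     forall s y w, 0 <= s <= T -> Rabs (s - t) < del -> Rabs (y - x) < del ->
       dist Y w z < del -> Rabs (K s y w - K t x z) < eps)
  (HN : forall h, h > 0 -> (N h >= 1)%nat)
  (Hdx : forall h, h > 0 -> dx h > 0)
  (HCtau : forall h, h > 0 -> T / INR (N h) <= C * h)
  (HCdx : forall h, h > 0 -> dx h <= C * h)
  (HMeven : forall h, h > 0 -> Nat.Even (M h))
  (HMinf : forall B, exists h0, h0 > 0 /\
     forall h, 0 < h < h0 -> INR (M h) * dx h > B)
  (HZhfin : forall h t x, h > 0 -> 0 <= t <= T -> finite_set (Zh h t x))
  (HZhne : forall h t x, h > 0 -> 0 <= t <= T -> exists z, Zh h t x z)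
  (HZhsub : forall h t x z, h > 0 -> 0 <= t <= T -> Zh h t x z -> Z t x z)
  (HZhconv : forall Rb eps, eps > 0 -> exists h0, h0 > 0 /\
     forall h, 0 < h < h0 -> forall t x, 0 <= t <= T -> Rabs x <= Rb ->
       hausdorff_dist Y (Zh h t x) (Z t x) < eps)
  (HZhcont : forall h, h > 0 -> forall t x, 0 <= t <= T ->
     forall eps, eps > 0 -> exists del, del > 0 /\
     forall s y, 0 <= s <= T -> Rabs (s - t) < del -> Rabs (y - x) < del ->
       hausdorff_dist Y (Zh h s y) (Zh h t x) < eps)
  (Hub : exists B, forall h t x, h > 0 -> 0 <= t <= T -> Rabs (u h t x) <= B) :
  forall t x, 0 <= t <= T ->
    interv_op Z Gamma K (u_lower T u) t x
      <= liminf_at (grid_set T Zh Gamma K N M dx u t x)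
    /\ liminf_at (grid_set T Zh Gamma K N M dx u t x)
      <= limsup_at (grid_set T Zh Gamma K N M dx u t x)
    /\ limsup_at (grid_set T Zh Gamma K N M dx u t x)
      <= interv_op Z Gamma K (u_upper T u) t x.
Proof.
  intros t x Ht; destruct Hub as [Bu HBu].
  assert (Htail : bounded_tail_family (grid_set T Zh Gamma K N M dx u t x))
    by (eapply grid_set_tail; eauto).
  split; [|split].
  - apply liminf_at_ge; [exact Htail|]; intros eps He.
    eapply grid_set_eventually_ge; eauto.
  - apply liminf_at_le_limsup_at, Htail.
  - apply limsup_at_le; [exact Htail|]; intros eps He.
    eapply grid_set_eventually_le; eauto.
Qed.
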